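(* Let $A,\Delta A\in\mathbb{R}^{n\times m}$, $\widetilde A=A+\Delta A$, $1\le r<\min\{n,m\}$, $\operatorname{rank}(A)\ge r$, and assume $\sigma_r-\widetilde\sigma_{r+1}>0$ and $\widetilde\sigma_r-\sigma_{r+1}>0$. Then, with the notation of the context, \[\|\sin\Theta(U_1,\widetilde U_1)\|=\big\|F_U^{12}\circ(U_1^T(\Delta A)\widetilde V_2\widetilde\Sigma_2^T+\Sigma_1 V_1^T(\Delta A)^T\widetilde U_2)\big\|=\big\|F_U^{21}\circ(U_2^T(\Delta A)\widetilde V_1\widetilde\Sigma_1^T+\Sigma_2 V_2^T(\Delta A)^T\widetilde U_1)\big\|,\] \[\|\sin\Theta(V_1,\widetilde V_1)\|=\big\|F_V^{12}\circ(\Sigma_1^T U_1^T(\Delta A)\widetilde V_2+ V_1^T(\Delta A)^T\widetilde U_2\widetilde\Sigma_2)\big\|=\big\|F_V^{21}\circ(\Sigma_2^T U_2^T(\Delta A)\widetilde V_1+ V_2^T(\Delta A)^T\widetilde U_1\widetilde\Sigma_1)\big\|.\]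
   Context: $A=U\Sigma V^T$, $\widetilde A=\widetilde U\widetilde\Sigma\widetilde V^T$ are full SVDs ($U,\widetilde U\in\mathbb{R}^{n\times n}$, $V,\widetilde V\in\mathbb{R}^{m\times m}$ orthogonal, $\Sigma,\widetilde\Sigma\in\mathbb{R}^{n\times m}$ rectangular diagonal with nonincreasing nonnegative diagonals $\sigma_1\ge\dots$, $\widetilde\sigma_1\ge\dots$); $\sigma_i=\widetilde\sigma_i=0$ for $i>\min\{n,m\}$. Partition $U=(U_1\ U_2)$, $U_1\in\mathbb{R}^{n\times r}$; $V=(V_1\ V_2)$, $V_1\in\mathbb{R}^{m\times r}$; $\Sigma_1=\mathrm{diag}(\sigma_1,\dots,\sigma_r)$, $\Sigma_2\in\mathbb{R}^{(n-r)\times(m-r)}$ rectangular diagonal with diagonal $\sigma_{r+1},\sigma_{r+2},\dots$; likewise with tildes. $\circ$ is the Hadamard product; $\|\cdot\|$ is the spectral norm. $(F_U^{12})_{i,j-r}=1/(\widetilde\sigma_j^2-\sigma_i^2)$ for $1\le i\le r<j\le n$; $(F_U^{21})_{i-r,j}=1/(\widetilde\sigma_j^2-\sigma_i^2)$ for $r<i\le n$, $1\le j\le r$; $F_V^{12},F_V^{21}$ are defined the same way with $n$ replaced by $m$. For $X,\widetilde X\in\mathbb{R}^{d\times r}$ with orthonormal columns, if $\zeta_1\ge\dots\ge\zeta_r$ are the singular values of $X^T\widetilde X$, then $\sin\Theta(X,\widetilde X)=\mathrm{diag}(\sqrt{1-\zeta_1^2},\dots,\sqrt{1-\zeta_r^2})$.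 *)

From HB Require Import structures.
From mathcomp Require Import all_boot all_order all_algebra.
From mathcomp Require Import classical_sets reals.
Set Implicit Arguments. Unset Strict Implicit. Unset Printing Implicit Defensive.
Import Order.TTheory GRing.Theory Num.Theory.
Local Open Scope ring_scope.
Local Open Scope classical_set_scope.

Section Defs.
Variable R : realType.

(* Entry (i,j) of A, with 0-based nat indices; 0 when out of range. *)
Definition mget {p q} (A : 'M[R]_(p, q)) (i j : nat) : R :=
  match insub i, insub j with
  | Some i', Some j' => A i' j'
  | _, _ => 0
  end.

Definition subblock {p q} (r0 c0 p' q' : nat) (A : 'M[R]_(p, q)) : 'M[R]_(p', q') :=
  \matrix_(i < p', j < q') mget A (r0 + i) (c0 + j).

(* k-th diagonal entry (0-based) of a rectangular diagonal matrix:
   sv S k = sigma_{k+1}; it is 0 for k >= min(p,q). *)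
Definition sv {p q} (S : 'M[R]_(p, q)) (k : nat) : R := mget S k k.

Definition orthogonal_mx {p} (U : 'M[R]_p) : Prop := U^T *m U = 1%:M.

Definition rect_diag {p q} (S : 'M[R]_(p, q)) : Prop :=
  forall (i : 'I_p) (j : 'I_q), (i : nat) != j -> S i j = 0.

Definition is_svd {p q} (A : 'M[R]_(p, q)) (U : 'M[R]_p) (S : 'M[R]_(p, q))
    (V : 'M[R]_q) : Prop :=
  [/\ orthogonal_mx U, orthogonal_mx V, rect_diag S,
      (forall i j : nat, (i <= j)%N -> 0 <= sv S j <= sv S i)
    & A = U *m S *m V^T].

Definition vnorm {q} (x : 'cV[R]_q) : R := Num.sqrt (\sum_i x i 0 ^+ 2).

Definition spec_norm {p q} (A : 'M[R]_(p, q)) : R :=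
  sup [set y | exists x : 'cV[R]_q, vnorm x <= 1 /\ y = vnorm (A *m x)].

Definition hadamard {p q} (A B : 'M[R]_(p, q)) : 'M[R]_(p, q) :=
  \matrix_(i, j) (A i j * B i j).

(* sin Theta(X, Xt) = diag(sqrt(1 - zeta_i^2)), where the zeta_i are the
   diagonal entries of Z in an SVD  X^T Xt = P Z Q^T. *)
Definition sinTheta_of {r} (Z : 'M[R]_r) : 'M[R]_r :=
  \matrix_(i, j) (if i == j then Num.sqrt (1 - Z i i ^+ 2) else 0).

(* (F^{12})_{i,j-r} = 1/(st_j^2 - s_i^2), 1<=i<=r<j<=d  (0-based below) *)
Definition F12 (d r : nat) (s st : nat -> R) : 'M[R]_(r, d - r) :=
  \matrix_(i, j) (1 / (st (r + j)%N ^+ 2 - s i ^+ 2)).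
(* (F^{21})_{i-r,j} = 1/(st_j^2 - s_i^2), r<i<=d, 1<=j<=r *)
Definition F21 (d r : nat) (s st : nat -> R) : 'M[R]_(d - r, r) :=
  \matrix_(i, j) (1 / (st j ^+ 2 - s (r + i)%N ^+ 2)).

End Defs.

(* Write W := U^T Ut.  From A V = U S and (A + dA) Vt = Ut St one gets the
   Sylvester-type identity
     U^T dA Vt St^T + S V^T dA^T Ut = W (St St^T) - (S S^T) W,
   whose (i, j) entry is W_ij (st_j^2 - s_i^2).  The gap conditions make these
   factors nonzero on the two off-diagonal blocks, so the Hadamard products
   with F^12 and F^21 are exactly U1^T Ut2 and U2^T Ut1.  Their Gram matrices
   are 1 - G G^T and 1 - G^T G for G = U1^T Ut1 = P Z Q^T, i.e. the square of
   sin Theta = (1 - Z^2)^(1/2) up to orthogonal factors, so both have the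
   spectral norm of sin Theta.  The right singular subspaces of A are the left
   ones of A^T. *)

From HB Require Import structures.
From mathcomp Require Import all_boot all_order all_algebra.
From mathcomp Require Import classical_sets reals.
From mathcomp Require Import ring lra.
Import Order.TTheory GRing.Theory Num.Theory.
Local Open Scope ring_scope.
Set Implicit Arguments. Unset Strict Implicit.

Section MatrixEntries.
Variable R : realType.
Implicit Types (p q i j : nat).

Variant index_spec p q i j : Prop :=
  | IndexIn (i' : 'I_p) (j' : 'I_q) of i = i' & j = j'
  | IndexOut of ~~ ((i < p) && (j < q))%N.

Lemma indexP p q i j : index_spec p q i j.
Proof.
case: (ltnP i p) => hi; last by apply: IndexOut; rewrite ltnNge hi.
case: (ltnP j q) => hj; last by apply: IndexOut; rewrite (ltnNge j) hj andbF.
exact: (@IndexIn _ _ _ _ (Ordinal hi) (Ordinal hj)).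
Qed.

Lemma mgetE p q (A : 'M[R]_(p, q)) (i : 'I_p) (j : 'I_q) : mget A i j = A i j.
Proof. by rewrite /mget !valK. Qed.

Lemma mget_out p q (A : 'M[R]_(p, q)) i j :
  ~~ ((i < p) && (j < q))%N -> mget A i j = 0.
Proof.
rewrite /mget; case/nandP => out; first by rewrite insubN.
by case: insub => // i'; rewrite insubN.
Qed.

Lemma matrix_mgetP p q (A B : 'M[R]_(p, q)) :
  (forall i j, (i < p)%N -> (j < q)%N -> mget A i j = mget B i j) -> A = B.
Proof. by move=> eqAB; apply/matrixP => i j; rewrite -!mgetE eqAB. Qed.

Lemma mgetD p q (A B : 'M[R]_(p, q)) i j :
  mget (A + B) i j = mget A i j + mget B i j.
Proof.
case: (indexP p q i j) => [i' j' -> -> | out]; first by rewrite !mgetE mxE.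
by rewrite !mget_out ?addr0.
Qed.

Lemma mgetB p q (A B : 'M[R]_(p, q)) i j :
  mget (A - B) i j = mget A i j - mget B i j.
Proof.
case: (indexP p q i j) => [i' j' -> -> | out]; first by rewrite !mgetE !mxE.
by rewrite !mget_out ?subr0.
Qed.

Lemma mgetT p q (A : 'M[R]_(p, q)) i j : mget A^T i j = mget A j i.
Proof.
case: (indexP q p i j) => [i' j' -> -> | out]; first by rewrite !mgetE mxE.
by rewrite !mget_out // andbC.
Qed.

Lemma mgetM p q s (A : 'M[R]_(p, q)) (B : 'M[R]_(q, s)) i j :
  mget (A *m B) i j = \sum_(k < q) mget A i k * mget B k j.
Proof.
case: (indexP p s i j) => [i' j' -> -> | out].
  by rewrite mgetE mxE; apply: eq_bigr => k _; rewrite !mgetE.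
rewrite mget_out // big1 // => k _.
case/nandP: out => out.
  by rewrite (mget_out A) ?mul0r // negb_and out.
by rewrite (mget_out B) ?mulr0 // negb_and out orbT.
Qed.

Lemma mget1 p i j : mget (1%:M : 'M[R]_p) i j = ((i < p)%N && (i == j))%:R.
Proof.
case: (indexP p p i j) => [i' j' -> -> | out]; first by rewrite mgetE mxE ltn_ord.
rewrite mget_out //; case: (ltnP i p) out => //= hip; rewrite -leqNgt => hpj.
by case: eqP => // eij; move: hip; rewrite eij ltnNge hpj.
Qed.

Lemma mget_subblock p q a b p' q' (A : 'M[R]_(p, q)) i j :
  mget (subblock a b p' q' A) i j =
  if ((i < p') && (j < q'))%N then mget A (a + i) (b + j) else 0.
Proof.
case: (indexP p' q' i j) => [i' j' -> -> | out]; first by rewrite mgetE mxE !ltn_ord.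
by rewrite mget_out // (negbTE out).
Qed.

Lemma mget_rect_diag p q (D : 'M[R]_(p, q)) i j :
  rect_diag D -> mget D i j = if i == j then sv D i else 0.
Proof.
move=> diagD; case: eqP => [-> // | neq].
case: (indexP p q i j) => [i' j' ei ej | out]; last by rewrite mget_out.
by rewrite ei ej mgetE diagD // -ei -ej; apply/eqP.
Qed.

Lemma rect_diag_trmx p q (D : 'M[R]_(p, q)) : rect_diag D -> rect_diag D^T.
Proof. by move=> diagD i j neq; rewrite mxE diagD // eq_sym. Qed.

Lemma sv_trmx p q (D : 'M[R]_(p, q)) : sv D^T = sv D.
Proof. by apply/boolp.funext => k; rewrite /sv mgetT. Qed.

Lemma mget_mul_diagr p q s (X : 'M[R]_(p, q)) (D : 'M[R]_(q, s)) i j :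
  rect_diag D -> mget (X *m D) i j = mget X i j * sv D j.
Proof.
move=> diagD; rewrite mgetM.
under eq_bigr => k _ do rewrite [mget D _ _]mget_rect_diag //.
case: (ltnP j q) => hj.
  rewrite (bigD1 (Ordinal hj)) //= eqxx big1 ?addr0 // => k neq.
  case: eqP => [ekj | _]; last by rewrite mulr0.
  by move: neq; rewrite -(inj_eq val_inj) /= ekj eqxx.
rewrite mget_out ?mul0r; last by rewrite negb_and (ltnNge j) hj orbT.
rewrite big1 // => k _; case: eqP => [ekj | _]; last by rewrite mulr0.
by move: (ltn_ord k); rewrite ekj ltnNge hj.
Qed.

Lemma mget_mul_diagl p q s (D : 'M[R]_(p, q)) (X : 'M[R]_(q, s)) i j :
  rect_diag D -> mget (D *m X) i j = sv D i * mget X i j.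
Proof.
move=> diagD; have diagDT := rect_diag_trmx diagD.
by rewrite -[D *m X]trmxK trmx_mul mgetT mget_mul_diagr // mgetT sv_trmx mulrC.
Qed.

End MatrixEntries.

Section Subblocks.
Variable R : realType.
Implicit Types (p q a b k : nat).

Lemma subblock_full p q (A : 'M[R]_(p, q)) : subblock 0 0 p q A = A.
Proof. by apply/matrixP => i j; rewrite mxE !add0n mgetE. Qed.

Lemma subblock_trmx p q a b p' q' (A : 'M[R]_(p, q)) :
  subblock a b p' q' A^T = (subblock b a q' p' A)^T.
Proof. by apply/matrixP => i j; rewrite !mxE mgetT. Qed.

Lemma subblockD p q a b p' q' (A B : 'M[R]_(p, q)) :
  subblock a b p' q' (A + B) = subblock a b p' q' A + subblock a b p' q' B.
Proof. by apply/matrixP => i j; rewrite !mxE mgetD. Qed.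

Lemma subblock_mul N K Q a b p q (X : 'M[R]_(N, K)) (Y : 'M[R]_(K, Q)) :
  subblock a b p q (X *m Y) = subblock a 0 p K X *m subblock 0 b K q Y.
Proof.
apply/matrixP => i j; rewrite !mxE mgetM.
by apply: eq_bigr => k _; rewrite !mxE !add0n.
Qed.

Lemma subblock1 N a p : (a + p <= N)%N -> subblock a a p p (1%:M : 'M[R]_N) = 1%:M.
Proof.
move=> hN; apply/matrixP => i j; rewrite !mxE mget1 eqn_add2l.
by rewrite (leq_trans _ hN) ?ltn_add2l.
Qed.

Lemma rect_diag_subblock N M a p q (D : 'M[R]_(N, M)) :
  rect_diag D -> rect_diag (subblock a a p q D).
Proof.
move=> diagD i j neq; rewrite mxE mget_rect_diag //.
by rewrite eqn_add2l (negbTE neq).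
Qed.

(* Multiplying by a diagonal factor only involves its diagonal, so the
   inner dimension [k] of the blocks may be cut down to [q] (or to the
   columns that exist at all). *)
Lemma subblock_mul_trmx_diag N N' M a b p q k
    (X : 'M[R]_(N, M)) (D : 'M[R]_(N', M)) :
  rect_diag D -> ((q <= k) || (M <= b + k))%N ->
  subblock a b p q (X *m D^T) = subblock a b p k X *m (subblock b b q k D)^T.
Proof.
move=> diagD hk; apply/matrixP => i j; rewrite mxE -mgetE.
have diagDT := rect_diag_trmx diagD.
rewrite !mget_mul_diagr //; last exact/rect_diag_trmx/rect_diag_subblock.
rewrite !sv_trmx /sv !mget_subblock !ltn_ord /=.
case: (ltnP j k) => //= hjk; rewrite mulr0.
have hMj : (M <= b + j)%N.
  case/orP: hk => [hqk | hMk]; last by rewrite (leq_trans hMk) ?leq_add2l.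
  by move: (leq_trans (ltn_ord j) hqk); rewrite ltnNge hjk.
by rewrite (mget_out X) ?mul0r // negb_and (ltnNge _ M) hMj orbT.
Qed.

Lemma subblock_diag_mul N M Q a b p q k (D : 'M[R]_(N, M)) (X : 'M[R]_(M, Q)) :
  rect_diag D -> ((p <= k) || (M <= a + k))%N ->
  subblock a b p q (D *m X) = subblock a a p k D *m subblock a b k q X.
Proof.
move=> diagD hk; apply: trmx_inj.
rewrite -subblock_trmx !trmx_mul (subblock_mul_trmx_diag _ _ _ diagD hk).
by rewrite -!subblock_trmx.
Qed.

Lemma sum_ord_split (F : nat -> R) r M : (r <= M)%N ->
  \sum_(k < M) F k = \sum_(k < r) F k + \sum_(k < M - r) F (r + k)%N.
Proof.
move=> hr; rewrite -!(big_mkord xpredT) (big_cat_nat (leq0n r) hr) /=.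
congr (_ + _); rewrite -{1}[r]add0n big_addn big_mkord.
by apply: eq_bigr => k _; rewrite addnC.
Qed.

Lemma mulmx_trmx_colsplit N M r (X : 'M[R]_(N, M)) : (r <= M)%N ->
  X *m X^T = subblock 0 0 N r X *m (subblock 0 0 N r X)^T
           + subblock 0 r N (M - r) X *m (subblock 0 r N (M - r) X)^T.
Proof.
move=> hr; apply: matrix_mgetP => i j hi hj.
rewrite mgetD !mgetM (sum_ord_split (fun k => mget X i k * mget X^T k j) hr).
by congr (_ + _); apply: eq_bigr => k _; rewrite !mgetT !mget_subblock hi hj !ltn_ord.
Qed.

End Subblocks.

Section SpectralNorm.
Variable R : realType.
Local Open Scope classical_set_scope.
Implicit Types (p q : nat).

Lemma vnormE q (v : 'cV[R]_q) : vnorm v = Num.sqrt ((v^T *m v) 0 0).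
Proof.
by rewrite /vnorm mxE; congr Num.sqrt; apply: eq_bigr => i _; rewrite mxE expr2.
Qed.

Lemma vnorm_ge0 q (v : 'cV[R]_q) : 0 <= vnorm v.
Proof. exact: sqrtr_ge0. Qed.

Lemma vnorm0 q : vnorm (0 : 'cV[R]_q) = 0.
Proof. by rewrite /vnorm big1 ?sqrtr0 // => i _; rewrite mxE expr0n. Qed.

Lemma vnormZ q c (v : 'cV[R]_q) : vnorm (c *: v) = `|c| * vnorm v.
Proof.
rewrite /vnorm -sqrtr_sqr -sqrtrM ?sqr_ge0 // mulr_sumr; congr Num.sqrt.
by apply: eq_bigr => i _; rewrite mxE exprMn.
Qed.

Lemma sqr_vnorm q (v : 'cV[R]_q) : vnorm v ^+ 2 = \sum_i v i 0 ^+ 2.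
Proof. by rewrite sqr_sqrtr // sumr_ge0 // => i _; exact: sqr_ge0. Qed.

Lemma normr_entry_le_vnorm q (v : 'cV[R]_q) i : `|v i 0| <= vnorm v.
Proof.
rewrite /vnorm -sqrtr_sqr ler_sqrt; last by apply: sumr_ge0 => k _; exact: sqr_ge0.
by rewrite (bigD1 i) //= lerDl; apply: sumr_ge0 => k _; exact: sqr_ge0.
Qed.

Lemma vnorm_eq0 q (v : 'cV[R]_q) : vnorm v = 0 -> v = 0.
Proof.
move=> v0; apply/matrixP => i j; rewrite (ord1 j) mxE.
by apply/eqP; rewrite -normr_le0 -v0 normr_entry_le_vnorm.
Qed.

Lemma vnorm_gram p p' q (X : 'M[R]_(p, q)) (Y : 'M[R]_(p', q)) (x : 'cV[R]_q) :
  X^T *m X = Y^T *m Y -> vnorm (X *m x) = vnorm (Y *m x).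
Proof.
move=> gramXY; rewrite !vnormE !trmx_mul -!mulmxA.
by rewrite [X^T *m _]mulmxA [Y^T *m _]mulmxA gramXY.
Qed.

Lemma vnorm_orthogonal q (Q : 'M[R]_q) (x : 'cV[R]_q) :
  orthogonal_mx Q -> vnorm (Q *m x) = vnorm x.
Proof.
move=> oQ; rewrite -[in RHS](mul1mx x); apply: vnorm_gram.
by rewrite oQ trmx1 mul1mx.
Qed.

Lemma cauchy_schwarz q (u v : 'cV[R]_q) : (u^T *m v) 0 0 <= vnorm u * vnorm v.
Proof.
have [u0|u0] := eqVneq (vnorm u) 0.
  by rewrite u0 mul0r (vnorm_eq0 u0) trmx0 mul0mx mxE.
have [v0|v0] := eqVneq (vnorm v) 0.
  by rewrite v0 mulr0 (vnorm_eq0 v0) mulmx0 mxE.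
have ua : 0 < vnorm u by rewrite lt_def u0 vnorm_ge0.
have vb : 0 < vnorm v by rewrite lt_def v0 vnorm_ge0.
(* Sum the inequalities [0 <= (|v| u_i - |u| v_i)^2]. *)
suff : 2 * vnorm u * vnorm v * (u^T *m v) 0 0
       <= vnorm v ^+ 2 * vnorm u ^+ 2 + vnorm u ^+ 2 * vnorm v ^+ 2.
  have := mulr_gt0 ua vb; nra.
rewrite {1}(sqr_vnorm u) {2}(sqr_vnorm v) !mulr_sumr -big_split /= mxE mulr_sumr.
apply: ler_sum => i _; rewrite mxE.
have := sqr_ge0 (vnorm v * u i 0 - vnorm u * v i 0); nra.
Qed.

Let spec_set p q (X : 'M[R]_(p, q)) :=
  [set y | exists x : 'cV[R]_q, vnorm x <= 1 /\ y = vnorm (X *m x)].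

Lemma spec_set_has_sup p q (X : 'M[R]_(p, q)) : has_sup (spec_set X).
Proof.
split; first by exists (vnorm (X *m 0)); exists 0; rewrite vnorm0 ler01.
exists (Num.sqrt (\sum_i (\sum_j `|X i j|) ^+ 2)) => _ [x [x1 ->]].
rewrite /vnorm ler_sqrt; last by apply: sumr_ge0 => k _; exact: sqr_ge0.
apply: ler_sum => i _.
have Xxi : `|(X *m x) i 0| <= \sum_j `|X i j|.
  rewrite mxE; apply: (le_trans (ler_norm_sum _ _ _)); apply: ler_sum => j _.
  rewrite normrM; apply: ler_piMr => //.
  exact: le_trans (normr_entry_le_vnorm x j) x1.
by rewrite -real_normK ?num_real // lerXn2r ?nnegrE ?(le_trans _ Xxi).
Qed.

Lemma spec_norm_ub p q (X : 'M[R]_(p, q)) (x : 'cV[R]_q) :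
  vnorm x <= 1 -> vnorm (X *m x) <= spec_norm X.
Proof. by move=> x1; apply: sup_upper_bound (spec_set_has_sup X) _ _; exists x. Qed.

Lemma spec_norm_ge0 p q (X : 'M[R]_(p, q)) : 0 <= spec_norm X.
Proof. by have := @spec_norm_ub _ _ X 0; rewrite mulmx0 !vnorm0 ler01; apply. Qed.

Lemma vnorm_mul_le p q (X : 'M[R]_(p, q)) (y : 'cV[R]_q) :
  vnorm (X *m y) <= spec_norm X * vnorm y.
Proof.
have [y0|y0] := eqVneq (vnorm y) 0.
  by rewrite y0 mulr0 (vnorm_eq0 y0) mulmx0 vnorm0.
have yp : 0 < vnorm y by rewrite lt_def y0 vnorm_ge0.
have := @spec_norm_ub _ _ X ((vnorm y)^-1 *: y).
rewrite -scalemxAr !vnormZ ger0_norm ?invr_ge0 ?vnorm_ge0 // mulVf // lexx.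
by rewrite ler_pdivrMl // mulrC; apply.
Qed.

Lemma spec_norm_gram p p' q (X : 'M[R]_(p, q)) (Y : 'M[R]_(p', q)) :
  X^T *m X = Y^T *m Y -> spec_norm X = spec_norm Y.
Proof.
move=> gramXY; rewrite /spec_norm; congr sup; apply/seteqP.
by split => _ [x [x1 ->]]; exists x; rewrite (vnorm_gram _ gramXY).
Qed.

Lemma spec_norm_mul_trorthogonal p q (X : 'M[R]_(p, q)) (Q : 'M[R]_q) :
  orthogonal_mx Q -> spec_norm (X *m Q^T) = spec_norm X.
Proof.
move=> oQ; have oQT : orthogonal_mx Q^T by rewrite /orthogonal_mx trmxK mulmx1C.
rewrite /spec_norm; congr sup; apply/seteqP; split => _ [x [x1 ->]].
  by exists (Q^T *m x); rewrite vnorm_orthogonal // mulmxA.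
exists (Q *m x); rewrite vnorm_orthogonal //.
by rewrite -mulmxA (mulmxA Q^T) oQ mul1mx.
Qed.

Lemma spec_norm_trmx_le p q (X : 'M[R]_(p, q)) : spec_norm X <= spec_norm X^T.
Proof.
apply: ge_sup; first by exists (vnorm (X *m 0)); exists 0; rewrite vnorm0 ler01.
move=> _ [x [x1 ->]]; set y := X *m x.
(* |y|^2 = <x, X^T y> <= |x| |X^T| |y| <= |X^T| |y| *)
have y2 : vnorm y ^+ 2 = (x^T *m (X^T *m y)) 0 0.
  rewrite mulmxA -trmx_mul -/y sqr_vnorm mxE.
  by apply: eq_bigr => i _; rewrite [y^T _ _]mxE expr2.
have := cauchy_schwarz x (X^T *m y); have := vnorm_mul_le X^T y.
have := vnorm_ge0 y; have := vnorm_ge0 x; have := vnorm_ge0 (X^T *m y).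
have := spec_norm_ge0 X^T.
nra.
Qed.

Lemma spec_norm_trmx p q (X : 'M[R]_(p, q)) : spec_norm X^T = spec_norm X.
Proof.
by apply/le_anti; rewrite spec_norm_trmx_le -{2}[X]trmxK spec_norm_trmx_le.
Qed.

End SpectralNorm.

Section SinTheta.
Variable R : realType.
Implicit Types (p q r : nat).

Lemma mget_gram_ge0 p q (X : 'M[R]_(p, q)) i : 0 <= mget (X^T *m X) i i.
Proof. by rewrite mgetM sumr_ge0 // => k _; rewrite mgetT -expr2 sqr_ge0. Qed.

Lemma mget_gram_diag p q (D : 'M[R]_(p, q)) i j :
  rect_diag D -> mget (D^T *m D) i j = if i == j then sv D i ^+ 2 else 0.
Proof.
move=> diagD; rewrite mget_mul_diagl ?sv_trmx ?mget_rect_diag //.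
  by case: eqP => _; rewrite ?mulr0 ?expr2.
exact: rect_diag_trmx.
Qed.

Lemma svd_trmx p q (A : 'M[R]_(p, q)) U S V : is_svd A U S V -> is_svd A^T V S^T U.
Proof.
case=> oU oV diagS decrS ->; split => //; first exact: rect_diag_trmx.
  by rewrite sv_trmx.
by rewrite !trmx_mul trmxK mulmxA.
Qed.

Lemma sinTheta_of_trmx r (Z : 'M[R]_r) : sinTheta_of Z^T = sinTheta_of Z.
Proof. by apply/matrixP => i j; rewrite !mxE. Qed.

Lemma rect_diag_sinTheta r (Z : 'M[R]_r) : rect_diag (sinTheta_of Z).
Proof. by move=> i j neq; rewrite mxE -(inj_eq val_inj) (negbTE neq). Qed.

Lemma sinTheta_gram r (Z : 'M[R]_r) :
  rect_diag Z -> (forall i, (i < r)%N -> sv Z i ^+ 2 <= 1) ->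
  (sinTheta_of Z)^T *m sinTheta_of Z = 1%:M - Z^T *m Z.
Proof.
move=> diagZ Zle1; apply: matrix_mgetP => i j hi hj.
rewrite mgetB mget1 hi !mget_gram_diag //; last exact: rect_diag_sinTheta.
case: eqP => _ /=; last by rewrite subr0.
have := Zle1 i hi; have -> : i = Ordinal hi by [].
by rewrite /sv !mgetE mxE eqxx => Zi; rewrite sqr_sqrtr // subr_ge0.
Qed.

(* The sines of the canonical angles are read off any [M] whose Gram
   matrix is [1 - G^T G], where the cosines are the singular values of [G]. *)
Lemma spec_norm_sinTheta k r (G P Z Q : 'M[R]_r) (M : 'M[R]_(k, r)) :
  is_svd G P Z Q -> M^T *m M = 1%:M - G^T *m G ->
  spec_norm M = spec_norm (sinTheta_of Z).
Proof.
case=> oP oQ diagZ _ -> gramM; rewrite /orthogonal_mx in oP oQ.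
have QQt : Q *m Q^T = 1%:M := mulmx1C oQ.
have gramMQ : (M *m Q)^T *m (M *m Q) = 1%:M - Z^T *m Z.
  rewrite trmx_mul -mulmxA (mulmxA M^T) gramM !trmx_mul trmxK.
  rewrite mulmxBl mul1mx mulmxBr oQ !mulmxA oQ mul1mx -!mulmxA oQ mulmx1.
  by rewrite (mulmxA P^T) oP mul1mx.
have Zle1 i : (i < r)%N -> sv Z i ^+ 2 <= 1.
  move=> hi; have := mget_gram_ge0 (M *m Q) i.
  by rewrite gramMQ mgetB mget1 hi mget_gram_diag // eqxx subr_ge0.
rewrite -(spec_norm_mul_trorthogonal (sinTheta_of Z) oQ); apply: spec_norm_gram.
rewrite trmx_mul trmxK mulmxA -(mulmxA Q) sinTheta_gram // -gramMQ.
by rewrite trmx_mul !mulmxA QQt mul1mx -mulmxA QQt mulmx1.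
Qed.

Section OrthogonalBlocks.
Variables (n r : nat).
Hypothesis hrn : (r <= n)%N.

Local Notation blk1 X := (subblock 0 0 n r X).
Local Notation blk2 X := (subblock 0 r n (n - r) X).

Lemma orthogonal_colblock (X : 'M[R]_n) :
  orthogonal_mx X -> (blk1 X)^T *m blk1 X = 1%:M.
Proof. by move=> oX; rewrite -subblock_trmx -subblock_mul oX subblock1. Qed.

Lemma gram_offdiag_block (U Ut : 'M[R]_n) :
  orthogonal_mx U -> orthogonal_mx Ut ->
  ((blk2 U)^T *m blk1 Ut)^T *m ((blk2 U)^T *m blk1 Ut)
  = 1%:M - ((blk1 U)^T *m blk1 Ut)^T *m ((blk1 U)^T *m blk1 Ut).
Proof.
move=> oU oUt; have U2U2t : blk2 U *m (blk2 U)^T = 1%:M - blk1 U *m (blk1 U)^T.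
  by rewrite -(mulmx1C oU) (mulmx_trmx_colsplit U hrn) addrC addKr.
rewrite !trmx_mul !trmxK -mulmxA (mulmxA (blk2 U)) U2U2t mulmxBl mul1mx mulmxBr.
by rewrite (orthogonal_colblock oUt) !mulmxA.
Qed.

Lemma spec_norm_sinTheta_offdiag (U Ut : 'M[R]_n) (P Z Q : 'M[R]_r) :
  orthogonal_mx U -> orthogonal_mx Ut ->
  is_svd ((blk1 U)^T *m blk1 Ut) P Z Q ->
  spec_norm (sinTheta_of Z) = spec_norm ((blk1 U)^T *m blk2 Ut)
  /\ spec_norm (sinTheta_of Z) = spec_norm ((blk2 U)^T *m blk1 Ut).
Proof.
move=> oU oUt svdG; split; apply/esym; last first.
  exact: spec_norm_sinTheta svdG (gram_offdiag_block oU oUt).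
have := svd_trmx svdG; rewrite trmx_mul trmxK => svdGt.
rewrite -spec_norm_trmx trmx_mul trmxK -sinTheta_of_trmx.
exact: spec_norm_sinTheta svdGt (gram_offdiag_block oUt oU).
Qed.

End OrthogonalBlocks.
End SinTheta.

Section Perturbation.
Variable R : realType.

Lemma svd_perturbation_sylvester n m (A dA : 'M[R]_(n, m)) U Ut S St V Vt :
  is_svd A U S V -> is_svd (A + dA) Ut St Vt ->
  U^T *m dA *m Vt *m St^T + S *m V^T *m dA^T *m Ut
  = U^T *m Ut *m (St *m St^T) - S *m S^T *m (U^T *m Ut).
Proof.
case=> oU oV _ _ eA [oUt oVt _ _ eAt]; rewrite /orthogonal_mx in oU oV oUt oVt.
have UtA : U^T *m A = S *m V^T by rewrite eA !mulmxA oU mul1mx.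
have VtAt : V^T *m A^T = S^T *m U^T.
  by rewrite -trmx_mul eA -[_ *m V]mulmxA oV mulmx1 trmx_mul.
have AtVt : (A + dA) *m Vt = Ut *m St by rewrite eAt -mulmxA oVt mulmx1.
have AtUt : (A + dA)^T *m Ut = Vt *m St^T.
  by rewrite -[Ut]trmxK -trmx_mul eAt !mulmxA oUt mul1mx trmx_mul trmxK.
have edA : dA = (A + dA) - A by rewrite addrC addKr.
have term1 : U^T *m dA *m Vt *m St^T
             = U^T *m Ut *m (St *m St^T) - S *m V^T *m Vt *m St^T.
  rewrite edA mulmxBr !mulmxBl UtA.
  by rewrite -[U^T *m (A + dA) *m Vt]mulmxA AtVt !mulmxA.
have term2 : S *m V^T *m dA^T *m Ut
             = S *m V^T *m Vt *m St^T - S *m S^T *m (U^T *m Ut).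
  rewrite edA raddfB /= mulmxBr mulmxBl.
  rewrite -[S *m V^T *m (A + dA)^T *m Ut]mulmxA AtUt.
  by rewrite -[S *m V^T *m A^T]mulmxA VtAt !mulmxA.
by rewrite term1 term2 addrA subrK.
Qed.

Lemma mget_sylvester_diag p q k l (W : 'M[R]_(p, q)) (D : 'M[R]_(p, k))
    (Dt : 'M[R]_(q, l)) i j :
  rect_diag D -> rect_diag Dt ->
  mget (W *m (Dt *m Dt^T) - D *m D^T *m W) i j
  = mget W i j * (sv Dt j ^+ 2 - sv D i ^+ 2).
Proof.
move=> diagD diagDt; rewrite mgetB mulmxA -[D *m D^T *m W]mulmxA.
rewrite 2?mget_mul_diagr 2?mget_mul_diagl //; try exact: rect_diag_trmx.
by rewrite !sv_trmx; ring.
Qed.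

Lemma sqr_sv_gap_neq (s t : nat -> R) r i k :
  (forall i j, (i <= j)%N -> 0 <= s j <= s i) ->
  (forall i j, (i <= j)%N -> 0 <= t j <= t i) ->
  0 < s r.-1 - t r -> (i < r)%N -> (r <= k)%N -> t k ^+ 2 != s i ^+ 2.
Proof.
move=> decs dect gap hir hrk.
have /andP[_ sir] : 0 <= s r.-1 <= s i by apply: decs; rewrite -ltnS (ltn_predK hir).
have /andP[tk0 tkr] := dect r k hrk.
apply/eqP => e; nra.
Qed.

Lemma hadamard_div p q (F E W : 'M[R]_(p, q)) (g : 'I_p -> 'I_q -> R) :
  (forall i j, g i j != 0) -> (forall i j, F i j = 1 / g i j) ->
  (forall i j, E i j = W i j * g i j) -> hadamard F E = W.
Proof.
move=> g0 eF eE; apply/matrixP => i j.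
by rewrite mxE eF eE div1r mulrCA mulVf ?mulr1.
Qed.

End Perturbation.

Section LeftSingularSubspace.
Variable R : realType.
Variables (n m r : nat) (A dA : 'M[R]_(n, m)) (U Ut : 'M[R]_n)
          (S St : 'M[R]_(n, m)) (V Vt : 'M[R]_m).
Hypotheses (hrn : (r <= n)%N) (hrm : (r <= m)%N).
Hypotheses (svdA : is_svd A U S V) (svdAt : is_svd (A + dA) Ut St Vt).
Hypotheses (gapS : 0 < sv S r.-1 - sv St r) (gapSt : 0 < sv St r.-1 - sv S r).

Local Notation U1 := (subblock 0 0 n r U).
Local Notation U2 := (subblock 0 r n (n - r) U).
Local Notation V1 := (subblock 0 0 m r V).
Local Notation V2 := (subblock 0 r m (m - r) V).
Local Notation Ut1 := (subblock 0 0 n r Ut).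
Local Notation Ut2 := (subblock 0 r n (n - r) Ut).
Local Notation Vt1 := (subblock 0 0 m r Vt).
Local Notation Vt2 := (subblock 0 r m (m - r) Vt).
Local Notation S1 := (subblock 0 0 r r S).
Local Notation S2 := (subblock r r (n - r) (m - r) S).
Local Notation St1 := (subblock 0 0 r r St).
Local Notation St2 := (subblock r r (n - r) (m - r) St).
Local Notation E := (U^T *m dA *m Vt *m St^T + S *m V^T *m dA^T *m Ut).

Let diagS : rect_diag S. Proof. by case: svdA. Qed.
Let diagSt : rect_diag St. Proof. by case: svdAt. Qed.
Let hmr : (m <= r + (m - r))%N. Proof. by rewrite subnKC. Qed.

Lemma perturbation_block12 :
  U1^T *m dA *m Vt2 *m St2^T + S1 *m V1^T *m dA^T *m Ut2
  = subblock 0 r r (n - r) E.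
Proof.
rewrite subblockD; congr (_ + _).
  rewrite (subblock_mul_trmx_diag (k := m - r) _ _ _ diagSt) ?hmr ?orbT //.
  by rewrite !subblock_mul subblock_trmx subblock_full.
rewrite 2!subblock_mul subblock_full.
by rewrite (subblock_diag_mul (k := r) _ _ _ diagS) ?leqnn // subblock_trmx.
Qed.

Lemma perturbation_block21 :
  U2^T *m dA *m Vt1 *m St1^T + S2 *m V2^T *m dA^T *m Ut1
  = subblock r 0 (n - r) r E.
Proof.
rewrite subblockD; congr (_ + _).
  rewrite (subblock_mul_trmx_diag (k := r) _ _ _ diagSt) ?leqnn //.
  by rewrite !subblock_mul subblock_trmx subblock_full.
rewrite 2!subblock_mul subblock_full.
by rewrite (subblock_diag_mul (k := m - r) _ _ _ diagS) ?hmr ?orbT // subblock_trmx.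
Qed.

Lemma hadamard_F12 :
  hadamard (F12 n r (sv S) (sv St))
    (U1^T *m dA *m Vt2 *m St2^T + S1 *m V1^T *m dA^T *m Ut2) = U1^T *m Ut2.
Proof.
have [_ _ _ decS _] := svdA; have [_ _ _ decSt _] := svdAt.
rewrite perturbation_block12 -subblock_trmx -subblock_mul.
apply: (hadamard_div (g := fun i j => sv St (r + j) ^+ 2 - sv S i ^+ 2)).
- by move=> i j; rewrite subr_eq0 (sqr_sv_gap_neq decS decSt gapS) ?leq_addr.
- by move=> i j; rewrite mxE.
- move=> i j; rewrite !mxE (svd_perturbation_sylvester svdA svdAt).
  by rewrite mget_sylvester_diag.
Qed.

Lemma hadamard_F21 :
  hadamard (F21 n r (sv S) (sv St))
    (U2^T *m dA *m Vt1 *m St1^T + S2 *m V2^T *m dA^T *m Ut1) = U2^T *m Ut1.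
Proof.
have [_ _ _ decS _] := svdA; have [_ _ _ decSt _] := svdAt.
rewrite perturbation_block21 -subblock_trmx -subblock_mul.
apply: (hadamard_div (g := fun i j => sv St j ^+ 2 - sv S (r + i) ^+ 2)).
- by move=> i j; rewrite subr_eq0 eq_sym (sqr_sv_gap_neq decSt decS gapSt) ?leq_addr.
- by move=> i j; rewrite mxE.
- move=> i j; rewrite !mxE (svd_perturbation_sylvester svdA svdAt).
  by rewrite mget_sylvester_diag.
Qed.

Lemma sinTheta_left (P Z Q : 'M[R]_r) :
  is_svd (U1^T *m Ut1) P Z Q ->
  spec_norm (sinTheta_of Z) = spec_norm (hadamard (F12 n r (sv S) (sv St))
    (U1^T *m dA *m Vt2 *m St2^T + S1 *m V1^T *m dA^T *m Ut2))
  /\ spec_norm (sinTheta_of Z) = spec_norm (hadamard (F21 n r (sv S) (sv St))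
    (U2^T *m dA *m Vt1 *m St1^T + S2 *m V2^T *m dA^T *m Ut1)).
Proof.
have [oU _ _ _ _] := svdA; have [oUt _ _ _ _] := svdAt.
by rewrite hadamard_F12 hadamard_F21; exact: spec_norm_sinTheta_offdiag.
Qed.

End LeftSingularSubspace.

Unset Implicit Arguments.

Theorem corollary2p4 (R : realType) (n m r : nat) (A dA : 'M[R]_(n, m))
    (U Ut : 'M[R]_n) (S St : 'M[R]_(n, m)) (V Vt : 'M[R]_m) :
  (1 <= r)%N -> (r < minn n m)%N -> (r <= \rank A)%N ->
  is_svd A U S V -> is_svd (A + dA) Ut St Vt ->
  0 < sv S r.-1 - sv St r -> 0 < sv St r.-1 - sv S r ->
  let U1 := subblock 0 0 n r U in let U2 := subblock 0 r n (n - r) U in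
  let V1 := subblock 0 0 m r V in let V2 := subblock 0 r m (m - r) V in
  let Ut1 := subblock 0 0 n r Ut in let Ut2 := subblock 0 r n (n - r) Ut in
  let Vt1 := subblock 0 0 m r Vt in let Vt2 := subblock 0 r m (m - r) Vt in
  let S1 := subblock 0 0 r r S in let S2 := subblock r r (n - r) (m - r) S in
  let St1 := subblock 0 0 r r St in let St2 := subblock r r (n - r) (m - r) St in
  (forall (P : 'M[R]_r) (Z : 'M[R]_r) (Q : 'M[R]_r), is_svd (U1^T *m Ut1) P Z Q ->
     spec_norm (sinTheta_of Z)
       = spec_norm (hadamard (F12 n r (sv S) (sv St))
           (U1^T *m dA *m Vt2 *m St2^T + S1 *m V1^T *m dA^T *m Ut2))
     /\ spec_norm (sinTheta_of Z)
       = spec_norm (hadamard (F21 n r (sv S) (sv St))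
           (U2^T *m dA *m Vt1 *m St1^T + S2 *m V2^T *m dA^T *m Ut1)))
  /\
  (forall (P : 'M[R]_r) (Z : 'M[R]_r) (Q : 'M[R]_r), is_svd (V1^T *m Vt1) P Z Q ->
     spec_norm (sinTheta_of Z)
       = spec_norm (hadamard (F12 m r (sv S) (sv St))
           (S1^T *m U1^T *m dA *m Vt2 + V1^T *m dA^T *m Ut2 *m St2))
     /\ spec_norm (sinTheta_of Z)
       = spec_norm (hadamard (F21 m r (sv S) (sv St))
           (S2^T *m U2^T *m dA *m Vt1 + V2^T *m dA^T *m Ut1 *m St1))).
Proof.
move=> _ rmin _ svdA svdAt gapS gapSt U1 U2 V1 V2 Ut1 Ut2 Vt1 Vt2 S1 S2 St1 St2.
have /andP[/ltnW hrn /ltnW hrm] : (r < n)%N && (r < m)%N by rewrite -leq_min.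
split=> P Z Q svdG; first exact: (sinTheta_left hrn hrm svdA svdAt gapS gapSt svdG).
have svdAt' := svd_trmx svdAt; rewrite raddfD /= in svdAt'.
rewrite -(sv_trmx S) -(sv_trmx St) in gapS gapSt.
have := sinTheta_left hrm hrn (svd_trmx svdA) svdAt' gapS gapSt svdG.
rewrite !sv_trmx !subblock_trmx !trmxK => -[e12 e21].
by split; rewrite addrC.
Qed.
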